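(* Let $X$ and $Y$ be independent random variables such that, for the same $D>0$ and $\sigma^2>0$, $\mathbb{P}(|X|\ge x)\le De^{-x^2/(2\sigma^2)}$ and $\mathbb{P}(|Y|\ge x)\le De^{-x^2/(2\sigma^2)}$ for every $x>0$. Then for every $z>0$ and $k>0$, $$\mathbb{P}(X+Y\ge z)\le\big(1+D\sqrt{k/e}\sqrt{2\pi}\big)^2e^{-\frac{z^2}{4(1+1/k)\sigma^2}}.$$ *)

From HB Require Import structures.
From mathcomp Require Import all_boot all_order all_algebra.
From mathcomp Require Import all_classical all_reals all_analysis.
Set Implicit Arguments. Unset Strict Implicit. Unset Printing Implicit Defensive.
Import Order.TTheory GRing.Theory Num.Theory.
Local Open Scope classical_set_scope.
Local Open Scope ring_scope.

Definition indep2 d (T : measurableType d) (R : realType) (P : probability T R)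
  (X Y : {RV P >-> R}) : Prop :=
  forall A B : set R, measurable A -> measurable B ->
    P (X @^-1` A `&` Y @^-1` B) = (P (X @^-1` A) * P (Y @^-1` B))%E.

From HB Require Import structures.
From mathcomp Require Import all_boot all_order all_algebra.
From mathcomp Require Import all_classical all_reals all_analysis.
From mathcomp Require Import measurable_realfun ring.
Import Order.TTheory GRing.Theory Num.Theory.
Import numFieldNormedType.Exports.
Local Open Scope classical_set_scope.
Local Open Scope ring_scope.

Set Implicit Arguments.
Unset Strict Implicit.
Unset Printing Implicit Defensive.

(** Chernoff's bound with the parameter l = z / (2 sigma2 (1 + 1/k)) and
   independence give P(X + Y >= z) <= E[e^(l|X|)] E[e^(l|Y|)] e^(-l z).
   Writing e^(l|Z|) = 1 + int_0^|Z| l e^(l t) dt and exchanging the integrals,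
   the tail bound turns E[e^(l|Z|)] into at most 1 plus a Gaussian integral,
   1 + D l sqrt(2 pi sigma2) e^(l^2 sigma2 / 2).  The inequality
   u <= sqrt(k/e) e^(u^2/(2k)) trades the linear factor l for the extra
   factor (1 + 1/k) in the exponent. *)

Section expR_integrals.
Context {R : realType}.
Local Notation mu := (@lebesgue_measure R).

Lemma continuous_expRM (l : R) : continuous (fun t : R => expR (l * t)).
Proof.
move=> x; apply: (@continuous_comp _ _ _ ( *%R l) expR); last exact: continuous_expR.
exact: (@continuousM _ _ (cst l) id x (cvg_cst _) cvg_id).
Qed.

Lemma is_derive_expRM (l x : R) :
  is_derive x 1 (fun t => expR (l * t)) (l * expR (l * x)).
Proof. by apply: is_derive_eq; rewrite mulrC scaler1. Qed.

Lemma integral_itv0c_expRM (l a : R) : 0 <= a ->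
  (\int[mu]_(t in `]0%R, a]) (l * expR (l * t))%:E = (expR (l * a) - 1)%:E)%E.
Proof.
rewrite le_eqVlt => /predU1P[<-|a0].
  by rewrite set_itv_ge ?integral_set0 ?mulr0 ?expR0 ?subrr// ltxx.
have cont_lexp : continuous (fun t : R => l * expR (l * t)).
  move=> x; apply: (@continuousM _ _ (cst l) _ x); first exact: cvg_cst.
  exact: continuous_expRM.
rewrite (@integral_itv_obnd_cbnd _ 0 (BRight a) (fun t => (l * expR (l * t))%:E)).
  rewrite (@continuous_FTC2 _ _ (fun t => expR (l * t))) //.
  - by rewrite mulr0 expR0 EFinB.
  - exact: continuous_subspaceT.
  - split.
    + by move=> x _; apply: ex_derive; exact: is_derive_expRM.
    + by apply: cvg_at_right_filter; exact: continuous_expRM.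
    + by apply: cvg_at_left_filter; exact: continuous_expRM.
  - move=> x _; rewrite derive1E.
    exact: (@derive_val _ _ _ _ _ _ _ (is_derive_expRM l x)).
apply/measurable_EFinP; apply: measurable_funTS.
exact: continuous_measurable_fun.
Qed.

(* Completing the square turns the integrand into a multiple of the density
   of N(l s2, s2). *)
Lemma integral_expRM_gauss (l s2 : R) : 0 < s2 ->
  (\int[mu]_t (expR (l * t) * expR (- t ^+ 2 / (2 * s2)))%:E =
   (Num.sqrt (2 * pi * s2) * expR (l ^+ 2 * s2 / 2))%:E)%E.
Proof.
move=> s0.
set C := Num.sqrt (2 * pi * s2) * expR (l ^+ 2 * s2 / 2).
have C0 : 0 <= C by rewrite mulr_ge0 ?sqrtr_ge0 ?expR_ge0.
have gaussE t : expR (l * t) * expR (- t ^+ 2 / (2 * s2)) =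
    C * normal_pdf (l * s2) (Num.sqrt s2) t.
  rewrite normal_pdfE ?sqrtr_eq0 -?ltNge//.
  rewrite /normal_peak /normal_fun sqr_sqrtr ?ltW// /C.
  have -> : s2 * pi *+ 2 = 2 * pi * s2 by rewrite mulr2n; ring.
  have q0 : Num.sqrt (2 * pi * s2) != 0.
    by rewrite sqrtr_eq0 -ltNge !mulr_gt0// pi_gt0.
  transitivity (expR (l ^+ 2 * s2 / 2) * expR (- (t - l * s2) ^+ 2 / (s2 *+ 2)));
    last by field.
  by rewrite -!expRD mulr2n; congr expR; field; rewrite gt_eqF.
under eq_integral do rewrite gaussE EFinM.
rewrite ge0_integralZl_EFin//.
- by rewrite integral_normal_pdf mule1.
- by move=> t _; rewrite lee_fin normal_pdf_ge0.
- by apply/measurable_EFinP; exact: measurable_normal_pdf.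
Qed.

End expR_integrals.

Section tail_bound_mgf.
Context d (T : measurableType d) (R : realType) (P : probability T R).
Local Notation mu := (@lebesgue_measure R).
Variables (Z : T -> R) (D s2 l : R).
Hypotheses (mZ : measurable_fun setT Z) (D_ge0 : 0 <= D) (s2_gt0 : 0 < s2)
  (l_gt0 : 0 < l).
Hypothesis tailZ : forall x, 0 < x ->
  (P [set w | (x <= `|Z w|)%R] <= (D * expR (- (x ^+ 2) / (2 * s2)))%:E)%E.

Let under_graph := [set p : T * R | 0 < p.2] `&` [set p | p.2 <= `|Z p.1|].
Let h (p : T * R) := (l * expR (l * p.2) * \1_under_graph p)%:E.

Let measurable_under_graph : measurable under_graph.
Proof.
apply: measurableI.
  rewrite [X in measurable X](_ : _ = setT `&` snd @^-1` `]0, +oo[); last first.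
    by apply/seteqP; split => p /=; rewrite in_itv/= andbT; [move=> ?|move=> []].
  have msnd := @measurable_snd _ _ T R.
  by apply: msnd; [exact: measurableT|exact: measurable_itv].
rewrite -[X in measurable X]setTI.
have mle := @measurable_fun_le _ (T * R)%type R setT snd (fun p => `|Z p.1|).
apply: (mle measurableT (@measurable_snd _ _ T R)).
by do 2 apply: measurableT_comp => //.
Qed.

Let measurable_h : measurable_fun setT h.
Proof.
apply/measurable_EFinP; apply: measurable_funM; last exact: measurable_indic.
have mlexp : measurable_fun setT (fun t : R => l * expR (l * t)).
  apply: measurable_funM => //.
  by apply: continuous_measurable_fun; exact: continuous_expRM.
exact: (measurableT_comp mlexp (@measurable_snd _ _ T R)).
Qed.

Let h_ge0 p : (0 <= h p)%E.
Proof. by rewrite lee_fin mulr_ge0 ?indicE// mulr_ge0 ?expR_ge0// ltW. Qed.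

Let expR_norm_layer w : (expR (l * `|Z w|))%:E = (1 + \int[mu]_t h (w, t))%E.
Proof.
suff -> : (\int[mu]_t h (w, t) =
    \int[mu]_(t in `]0%R, (`|Z w|)%R]) (l * expR (l * t))%:E)%E.
  by rewrite integral_itv0c_expRM// -EFinD addrC subrK.
rewrite [in RHS]integral_mkcond; apply: eq_integral => t _.
rewrite /h /patch indicE.
have [tw|tw] := pselect (0 < t /\ t <= `|Z w|).
  by rewrite mem_set// mem_set ?mulr1//= in_itv/=; apply/andP.
by rewrite memNset// memNset ?mulr0//= in_itv/= => /andP.
Qed.

Let integral_h_le t :
  (\int[P]_w h (w, t) <= (D * l * (expR (l * t) * expR (- t ^+ 2 / (2 * s2))))%:E)%E.
Proof.
have [t_le0|t_gt0] := leP t 0.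
  rewrite integral0_eq; last first.
    move=> w _; rewrite /h indicE memNset ?mulr0// => -[/= t_gt0 _].
    by move: (lt_le_trans t_gt0 t_le0); rewrite ltxx.
  by rewrite lee_fin !mulr_ge0 ?expR_ge0// ltW.
set A := [set w | (t <= `|Z w|)%R].
have mA : measurable A.
  rewrite -[X in measurable X]setTI.
  have mle := @measurable_fun_le _ T R setT (cst t) (fun w => `|Z w|).
  exact: (mle measurableT (measurable_cst _) (measurableT_comp _ mZ)).
have -> : (\int[P]_w h (w, t) = \int[P]_w ((l * expR (l * t))%:E * (\1_A w)%:E))%E.
  apply: eq_integral => w _; rewrite /h -EFinM !indicE.
  have [tw|tw] := pselect (t <= `|Z w|).
    by rewrite mem_set// mem_set.
  by rewrite memNset; [rewrite memNset|case].
have mIA : measurable_fun setT (fun w => (\1_A w : R)%:E).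
  by apply/measurable_EFinP; exact: measurable_indic.
have lexp_ge0 : 0 <= l * expR (l * t) by rewrite mulr_ge0 ?expR_ge0// ltW.
rewrite ge0_integralZl_EFin ?integral_indic ?setIT//.
have -> : D * l * (expR (l * t) * expR (- t ^+ 2 / (2 * s2))) =
    l * expR (l * t) * (D * expR (- t ^+ 2 / (2 * s2))) by ring.
rewrite [leRHS]EFinM lee_pmul ?lee_fin//.
exact: tailZ.
Qed.

Lemma integral_expR_norm_le :
  (\int[P]_w (expR (l * `|Z w|))%:E <=
   (1 + D * l * Num.sqrt (2 * pi * s2) * expR (l ^+ 2 * s2 / 2))%:E)%E.
Proof.
under eq_integral do rewrite expR_norm_layer.
rewrite ge0_integralD//; last 2 first.
- by move=> w _; apply: integral_ge0 => t _; exact: h_ge0.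
- exact: (@measurable_fun_fubini_tonelli_F _ _ _ _ _ mu h measurable_h h_ge0).
rewrite integral_cst// [X in (1 * X + _)%E]probability_setT mul1e EFinD leeD2l//.
rewrite (@fubini_tonelli _ _ _ _ _ P mu h measurable_h h_ge0) /=.
set gauss := fun t => expR (l * t) * expR (- t ^+ 2 / (2 * s2)).
have mgauss : measurable_fun setT gauss.
  apply: measurable_funM.
    by apply: continuous_measurable_fun; exact: continuous_expRM.
  apply: measurableT_comp => //; apply: measurable_funM => //.
  exact: measurableT_comp.
apply: (@le_trans _ _ (\int[mu]_t (D * l * gauss t)%:E)%E).
  apply: ge0_le_integral => //.
  - by move=> t _; apply: integral_ge0 => w _; exact: h_ge0.
  - exact: (@measurable_fun_fubini_tonelli_G _ _ _ _ _ P h measurable_h h_ge0).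
  - by apply/measurable_EFinP; exact: measurable_funM.
under eq_integral do rewrite EFinM.
rewrite ge0_integralZl_EFin ?integral_expRM_gauss -?EFinM ?mulrA//.
- by move=> t _; rewrite lee_fin mulr_ge0 ?expR_ge0.
- by apply/measurable_EFinP.
- by rewrite mulr_ge0// ltW.
Qed.

End tail_bound_mgf.

Section indep2_integral.
Context d (T : measurableType d) (R : realType) (P : probability T R).
Variables (X Y : {RV P >-> R}).
Hypothesis hXY : indep2 X Y.

Let measurable_pair : measurable_fun setT (fun w => (X w, Y w)).
Proof. by apply/measurable_fun_pairP; split. Qed.

Let XY : {mfun T >-> (R * R)%type} :=
  HB.pack (fun w => (X w, Y w)) (isMeasurableFun.Build _ _ _ _ _ measurable_pair).

Let distribution_pairE A : measurable A ->
  (distribution P X \x distribution P Y)%E A = distribution P XY A.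
Proof. by apply: product_measure_unique => B C mB mC; exact: hXY. Qed.

Lemma indep2_ge0_integralM (F G : R -> R) :
    measurable_fun setT F -> measurable_fun setT G ->
    (forall x, 0 <= F x) -> (forall x, 0 <= G x) ->
  (\int[P]_w (F (X w) * G (Y w))%:E =
   \int[P]_w (F (X w))%:E * \int[P]_w (G (Y w))%:E)%E.
Proof.
move=> mF mG F0 G0.
pose f (p : R * R) := (F p.1 * G p.2)%:E.
have mf : measurable_fun setT f.
  apply/measurable_EFinP; apply: measurable_funM.
    exact: (measurableT_comp mF (@measurable_fst _ _ R R)).
  exact: (measurableT_comp mG (@measurable_snd _ _ R R)).
have f_ge0 p : (0 <= f p)%E by rewrite lee_fin mulr_ge0.
have mEF : measurable_fun setT (EFin \o F) by apply/measurable_EFinP.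
have mEG : measurable_fun setT (EFin \o G) by apply/measurable_EFinP.
rewrite -[LHS]/(\int[P]_w (f \o XY) w)%E -ge0_integral_distribution//.
rewrite -(eq_measure_integral _ (fun A mA _ => distribution_pairE mA)).
rewrite (fubini_tonelli1 f mf f_ge0) /fubini_F /f /=.
under eq_integral do under eq_integral do rewrite EFinM.
transitivity (\int[distribution P X]_x
    ((F x)%:E * \int[distribution P Y]_y (G y)%:E))%E.
  apply: eq_integral => x _; rewrite ge0_integralZl_EFin//.
  by move=> y _; rewrite lee_fin.
rewrite ge0_integralZr//; last 2 first.
- by move=> x _; rewrite lee_fin.
- by apply: integral_ge0 => y _; rewrite lee_fin.
by rewrite !ge0_integral_distribution.
Qed.

End indep2_integral.

Lemma chernoff_add_norm d (T : measurableType d) (R : realType)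
    (P : probability T R) (X Y : {RV P >-> R}) (z l : R) : 0 < l ->
  (P [set w | (z <= X w + Y w)%R] <=
   \int[P]_w (expR (l * `|X w|) * expR (l * `|Y w|))%:E * (expR (- (l * z)))%:E)%E.
Proof.
move=> l_gt0; apply: (le_trans (chernoff (X \+ Y) z l_gt0)).
rewrite lee_wpmul2r ?lee_fin ?expR_ge0// /mmt_gen_fun unlock.
have mX : measurable_fun setT X by exact: measurable_funPT.
have mY : measurable_fun setT Y by exact: measurable_funPT.
have mexp_norm (V : T -> R) : measurable_fun setT V ->
    measurable_fun setT (fun w => expR (l * `|V w|)).
  move=> mV; apply: measurableT_comp => //; apply: measurable_funM => //.
  exact: measurableT_comp.
apply: ge0_le_integral => //.
- by move=> *; rewrite lee_fin expR_ge0.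
- by apply/measurable_EFinP; apply: measurableT_comp.
- by apply/measurable_EFinP; apply: measurable_funM; exact: mexp_norm.
move=> w *; rewrite lee_fin -expRD ler_expR /= mulrC -mulrDr ler_pM2l//.
by rewrite lerD ?ler_norm.
Qed.

(* [x <= e^(x - 1)] at [x = u^2 / k], after taking square roots. *)
Lemma ler_sqrt_expR_sqr (R : realType) (k u : R) : 0 < k ->
  u <= Num.sqrt (k / expR 1) * expR (u ^+ 2 / (2 * k)).
Proof.
move=> k_gt0.
have e_gt0 : 0 < expR 1 :> R by exact: expR_gt0.
have -> : Num.sqrt (k / expR 1) * expR (u ^+ 2 / (2 * k)) =
    Num.sqrt (k / expR 1 * expR (u ^+ 2 / k)).
  rewrite [RHS]sqrtrM ?divr_ge0 ?ltW//; congr (_ * _).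
  have -> : u ^+ 2 / k = u ^+ 2 / (2 * k) * 2%:R by field; rewrite gt_eqF.
  by rewrite expRM_natr sqrtr_sqr ger0_norm ?expR_ge0.
rewrite (le_trans (ler_norm u))// -sqrtr_sqr ler_sqrt; last first.
  by rewrite mulr_ge0 ?expR_ge0// divr_ge0// ltW.
have := expR_ge1Dx (u ^+ 2 / k - 1); rewrite addrC subrK expRB => x_le_exp.
have -> : k / expR 1 * expR (u ^+ 2 / k) = k * (expR (u ^+ 2 / k) / expR 1) by ring.
rewrite {1}(_ : u ^+ 2 = k * (u ^+ 2 / k)); last by field; rewrite gt_eqF.
by rewrite ler_wpM2l// ltW.
Qed.

Lemma gauss_mgf_constant_le (R : realType) (D s2 l k : R) :
    0 <= D -> 0 <= s2 -> 0 <= l -> 0 < k ->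
  1 + D * l * Num.sqrt (2 * pi * s2) * expR (l ^+ 2 * s2 / 2) <=
  (1 + D * Num.sqrt (k / expR 1) * Num.sqrt (2 * pi)) *
    expR (l ^+ 2 * s2 * (1 + k^-1) / 2).
Proof.
move=> D_ge0 s2_ge0 l_ge0 k_gt0.
set u := l * Num.sqrt s2.
have u2E : u ^+ 2 = l ^+ 2 * s2 by rewrite exprMn sqr_sqrtr.
rewrite [leRHS]mulrDl mul1r; apply: lerD.
  rewrite -[leLHS]expR0 ler_expR divr_ge0//.
  by rewrite !mulr_ge0 ?sqr_ge0 ?addr_ge0 ?invr_ge0// ltW.
have -> : expR (l ^+ 2 * s2 * (1 + k^-1) / 2) =
    expR (u ^+ 2 / (2 * k)) * expR (l ^+ 2 * s2 / 2).
  by rewrite -expRD u2E; congr expR; field; rewrite gt_eqF.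
rewrite sqrtrM ?mulr_ge0 ?pi_ge0//.
have -> : D * l * (Num.sqrt (2 * pi) * Num.sqrt s2) * expR (l ^+ 2 * s2 / 2) =
    D * Num.sqrt (2 * pi) * u * expR (l ^+ 2 * s2 / 2) by rewrite /u; ring.
have -> : D * Num.sqrt (k / expR 1) * Num.sqrt (2 * pi) *
      (expR (u ^+ 2 / (2 * k)) * expR (l ^+ 2 * s2 / 2)) =
    D * Num.sqrt (2 * pi) * (Num.sqrt (k / expR 1) * expR (u ^+ 2 / (2 * k))) *
      expR (l ^+ 2 * s2 / 2) by ring.
by rewrite ler_wpM2r ?expR_ge0// ler_wpM2l ?mulr_ge0 ?sqrtr_ge0// ler_sqrt_expR_sqr.
Qed.

Theorem lemmaA3 (d : measure_display) (T : measurableType d) (R : realType)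
  (P : probability T R) (X Y : {RV P >-> R}) (D sigma2 : R)
  (hD : 0 < D) (hs : 0 < sigma2) (hXY : indep2 X Y)
  (hX : forall x : R, 0 < x ->
     (P [set w | (x <= `|X w|)%R] <= (D * expR (- (x ^+ 2) / (2 * sigma2)))%:E)%E)
  (hY : forall x : R, 0 < x ->
     (P [set w | (x <= `|Y w|)%R] <= (D * expR (- (x ^+ 2) / (2 * sigma2)))%:E)%E) :
  forall z k : R, 0 < z -> 0 < k ->
    (P [set w | (z <= X w + Y w)%R] <=
     ((1 + D * Num.sqrt (k / expR 1) * Num.sqrt (2 * pi)) ^+ 2
        * expR (- (z ^+ 2) / (4 * (1 + k^-1) * sigma2)))%:E)%E.
Proof.
move=> z k z_gt0 k_gt0.
set c := 1 + k^-1; have c_gt0 : 0 < c by rewrite addr_gt0 ?invr_gt0.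
set l := z / (2 * sigma2 * c); have l_gt0 : 0 < l by rewrite divr_gt0// !mulr_gt0.
set a := D * Num.sqrt (k / expR 1) * Num.sqrt (2 * pi).
set M := expR (l ^+ 2 * sigma2 * c / 2).
have mgf_le (V : {RV P >-> R}) : (forall x : R, 0 < x ->
    (P [set w | (x <= `|V w|)%R] <= (D * expR (- (x ^+ 2) / (2 * sigma2)))%:E)%E) ->
    (\int[P]_w (expR (l * `|V w|))%:E <= ((1 + a) * M)%:E)%E.
  move=> tailV; apply: (le_trans (integral_expR_norm_le _ _ hs l_gt0 tailV)) => //.
  - exact: ltW.
  - by rewrite lee_fin gauss_mgf_constant_le ?ltW.
have mexp : measurable_fun setT (fun x : R => expR (l * `|x|)).
  by apply: measurableT_comp => //; apply: measurable_funM => //;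
    exact: normr_measurable.
apply: (le_trans (chernoff_add_norm X Y z l_gt0)).
rewrite (indep2_ge0_integralM hXY mexp mexp (fun=> expR_ge0 _) (fun=> expR_ge0 _)).
apply: (le_trans (lee_wpmul2r _ (lee_pmul _ _ (mgf_le X hX) (mgf_le Y hY)))).
- by rewrite lee_fin expR_ge0.
- by apply: integral_ge0 => w _; rewrite lee_fin expR_ge0.
- by apply: integral_ge0 => w _; rewrite lee_fin expR_ge0.
have exponentE : M ^+ 2 * expR (- (l * z)) = expR (- z ^+ 2 / (4 * c * sigma2)).
  rewrite -expRM_natr -expRD /l; congr expR.
  by field; rewrite !gt_eqF.
by rewrite -!EFinM mulrACA -!expr2 -exponentE mulrA.
Qed.
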